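(* Let $L$ be a bounded distributive lattice and $f\colon L^n\to L$ an aggregation function. If $f$ is inf-homogeneous and comonotone supremal, or $f$ is sup-homogeneous and comonotone infimal, then $f$ is a Sugeno integral, i.e. $f=\mathsf{Su}_m$ for some $L$-valued capacity $m$ on $[n]$.
   Context: $[n]=\{1,\dots,n\}$. An aggregation function is a monotone $f\colon L^n\to L$ with $f(0,\dots,0)=0$, $f(1,\dots,1)=1$. An $L$-valued capacity is $m\colon2^{[n]}\to L$, monotone, $m(\emptyset)=0$, $m([n])=1$; $\mathsf{Su}_m(\mathbf x)=\bigvee_{I\subseteq[n]}\big(m(I)\wedge\bigwedge_{i\in I}x_i\big)$ (empty meet $=1$). For $c\in L$, $\mathbf c=(c,\dots,c)$; $f$ is inf-homogeneous if $f(\mathbf c\wedge\mathbf x)=c\wedge f(\mathbf x)$, sup-homogeneous if $f(\mathbf c\vee\mathbf x)=c\vee f(\mathbf x)$, for all $\mathbf x\in L^n,c\in L$. $\mathbf x,\mathbf y$ are comonotone if for all $i,j$: ($x_i\le x_j$ and $y_i\le y_j$) or ($x_i\ge x_j$ and $y_i\ge y_j$). $f$ is comonotone supremal (resp. infimal) if $f(\mathbf x\vee\mathbf y)=f(\mathbf x)\vee f(\mathbf y)$ (resp. $f(\mathbf x\wedge\mathbf y)=f(\mathbf x)\wedge f(\mathbf y)$) for all comonotone $\mathbf x,\mathbf y$. *)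

From HB Require Import structures.
From mathcomp Require Import all_boot all_order.
Set Implicit Arguments. Unset Strict Implicit. Unset Printing Implicit Defensive.
Import Order.TTheory.
Local Open Scope order_scope.

Section Defs.
Context {d : Order.disp_t} {L : tbDistrLatticeType d} {n : nat}.

Definition cst (c : L) : 'I_n -> L := fun _ => c.
Definition vmeet (x y : 'I_n -> L) : 'I_n -> L := fun i => x i `&` y i.
Definition vjoin (x y : 'I_n -> L) : 'I_n -> L := fun i => x i `|` y i.
Definition vle (x y : 'I_n -> L) : Prop := forall i, x i <= y i.

Definition aggregation (f : ('I_n -> L) -> L) : Prop :=
  [/\ (forall x y, vle x y -> f x <= f y),
      f (cst \bot) = \bot & f (cst \top) = \top].

Definition capacity (m : {set 'I_n} -> L) : Prop :=
  [/\ (forall I J : {set 'I_n}, I \subset J -> m I <= m J),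
      m set0 = \bot & m setT = \top].

Definition sugeno (m : {set 'I_n} -> L) (x : 'I_n -> L) : L :=
  \join_(I : {set 'I_n}) (m I `&` \meet_(i in I) x i).

Definition inf_homogeneous (f : ('I_n -> L) -> L) : Prop :=
  forall x c, f (vmeet (cst c) x) = c `&` f x.
Definition sup_homogeneous (f : ('I_n -> L) -> L) : Prop :=
  forall x c, f (vjoin (cst c) x) = c `|` f x.

Definition comonotone (x y : 'I_n -> L) : Prop :=
  forall i j, (x i <= x j /\ y i <= y j) \/ (x j <= x i /\ y j <= y i).

Definition comonotone_supremal (f : ('I_n -> L) -> L) : Prop :=
  forall x y, comonotone x y -> f (vjoin x y) = f x `|` f y.
Definition comonotone_infimal (f : ('I_n -> L) -> L) : Prop :=
  forall x y, comonotone x y -> f (vmeet x y) = f x `&` f y.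
End Defs.

From HB Require Import structures.
From mathcomp Require Import all_boot all_order.
Import Order.TTheory.
Local Open Scope order_scope.

(* Either homogeneity makes f idempotent, f(c) = c.  A constant vector is
   comonotone with every Boolean vector 1_I, so comonotone supremality gives
   f(c \/ 1_I) = c \/ f(1_I) and comonotone infimality f(c /\ 1_I) =
   c /\ f(1_I); in both cases f is inf- and sup-homogeneous on Boolean
   vectors.  Put m(I) = f(1_I).  Then c /\ m(I) = f(c /\ 1_I) <= f(x) for c
   the meet of the x_i, i in I, hence Su_m <= f.  Conversely
   f(x) <= f(s \/ 1_T) = s \/ m(T), where T is the set of coordinates of x
   equal to top and s the join of the others; by distributivity,
   f(x) <= m(T) \/ \/_{j notin T} (f(x) /\ x_j), and f(x) /\ x_j is bounded
   through the vector obtained by raising x_j to top, which has fewer non-top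
   coordinates.  Induction on that number gives f <= Su_m. *)

Lemma meet_joinsr {d : Order.disp_t} {L : bDistrLatticeType d} (I : Type)
    (r : seq I) (P : {pred I}) (x : L) (F : I -> L) :
  x `&` \join_(i <- r | P i) F i = \join_(i <- r | P i) (x `&` F i).
Proof. exact: (big_morph _ (meetUr x) (meetx0 x)). Qed.

Section SugenoUpperBound.
Context {d : Order.disp_t} {L : tbDistrLatticeType d} {n : nat}.

Definition top_set (x : 'I_n -> L) : {set 'I_n} := [set i | x i == \top].

Definition raise (x : 'I_n -> L) (j : 'I_n) : 'I_n -> L :=
  fun i => if i == j then \top else x i.

Lemma vle_raise x j : vle x (raise x j).
Proof. by move=> i; rewrite /raise; case: (i == j); rewrite ?lex1. Qed.

Lemma top_set_raise x j : top_set (raise x j) = j |: top_set x.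
Proof.
apply/setP => i; rewrite in_setU1 !inE /raise.
by have [->|_] := eqVneq i j; rewrite ?eqxx.
Qed.

Lemma card_nontop_raise {x j} : j \notin top_set x ->
  (#|~: top_set (raise x j)| < #|~: top_set x|)%N.
Proof.
move=> jNT; apply: proper_card; rewrite top_set_raise properC.
by apply: properUr; rewrite sub1set.
Qed.

Context {m : {set 'I_n} -> L}.
Hypothesis m_mono : forall I J : {set 'I_n}, I \subset J -> m I <= m J.

Lemma sugeno_ge (I : {set 'I_n}) x : m I `&` \meet_(i in I) x i <= sugeno m x.
Proof. exact: (joins_sup (j := I)). Qed.

Lemma top_set_le_sugeno x : m (top_set x) <= sugeno m x.
Proof.
apply: le_trans (sugeno_ge (top_set x) x); rewrite lexI lexx /=.
by apply/meetsP => i; rewrite inE => /eqP ->.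
Qed.

Lemma sugeno_raise_meet x j : sugeno m (raise x j) `&` x j <= sugeno m x.
Proof.
rewrite /sugeno meetC meet_joinsr /=; apply/joinsP => I _.
apply: le_trans (sugeno_ge (j |: I) x); rewrite meetCA.
apply: leI2; first exact/m_mono/subsetUr.
apply/meetsP => i; rewrite in_setU1 => /orP [/eqP -> | iI]; first exact: leIl.
have [-> | neq_ij] := eqVneq i j; first exact: leIl.
apply: le_trans (leIr _ _) (le_trans (meets_inf _ iI) _).
by rewrite /raise (negbTE neq_ij).
Qed.

Lemma le_sugeno {g : ('I_n -> L) -> L} :
  (forall x y, vle x y -> g x <= g y) ->
  (forall x, g x <= m (top_set x) `|` \join_(j | j \notin top_set x) x j) ->
  forall x, g x <= sugeno m x.
Proof.
move=> g_mono g_le x; have [k] := ubnP #|~: top_set x|.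
elim: k x => // k IH x lt_k.
rewrite -[g x](meet_l (g_le x)) meetUr leUx.
rewrite (le_trans (leIr _ _) (top_set_le_sugeno x)) /= meet_joinsr /=.
apply/joinsP => j jNT; apply: le_trans (sugeno_raise_meet x j).
apply: leI2 (lexx _); apply: le_trans (g_mono _ _ (vle_raise x j)) (IH _ _).
exact: leq_trans (card_nontop_raise jNT) lt_k.
Qed.

End SugenoUpperBound.

Lemma comonotone_cstl {d : Order.disp_t} {L : tbDistrLatticeType d} {n : nat}
    (c : L) (y : 'I_n -> L) :
  (forall i j, y i >=< y j) -> comonotone (cst c) y.
Proof. by move=> y_cmp i j; rewrite /cst lexx; case/orP: (y_cmp i j); auto. Qed.

Section Indicator.
Context {d : Order.disp_t} {L : tbDistrLatticeType d} {n : nat}.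

Definition indicator (I : {set 'I_n}) : 'I_n -> L :=
  fun i => if i \in I then \top else \bot.

Lemma indicator_comparable I i j : indicator I i >=< indicator I j.
Proof.
rewrite /indicator /Order.comparable.
by case: (i \in I); case: (j \in I); rewrite ?le0x ?lex1 ?orbT.
Qed.

Lemma vle_indicator (I J : {set 'I_n}) :
  I \subset J -> vle (indicator I) (indicator J).
Proof.
move=> /subsetP IJ i; rewrite /indicator.
by case: ifP => [/IJ -> //|_]; rewrite le0x.
Qed.

Context {f : ('I_n -> L) -> L}.
Hypothesis f_mono : forall x y, vle x y -> f x <= f y.

Lemma mono_ext x y : (forall i, x i = y i) -> f x = f y.
Proof. by move=> xy; apply/le_anti; rewrite !f_mono // => i; rewrite xy. Qed.

Lemma capacity_indicator :
  f (cst \bot) = \bot -> f (cst \top) = \top ->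
  capacity (fun I => f (indicator I)).
Proof.
move=> f_bot f_top; split.
- by move=> I J /vle_indicator /f_mono.
- by rewrite -f_bot; apply: mono_ext => i; rewrite /indicator inE.
- by rewrite -f_top; apply: mono_ext => i; rewrite /indicator inE.
Qed.

Lemma inf_homogeneous_cst : f (cst \top) = \top -> inf_homogeneous f ->
  forall c, f (cst c) = c.
Proof.
move=> f_top f_inf c; rewrite -[RHS]meetx1 -f_top -f_inf.
by apply: mono_ext => i; rewrite /vmeet /cst meetx1.
Qed.

Lemma sup_homogeneous_cst : f (cst \bot) = \bot -> sup_homogeneous f ->
  forall c, f (cst c) = c.
Proof.
move=> f_bot f_sup c; rewrite -[RHS]joinx0 -f_bot -f_sup.
by apply: mono_ext => i; rewrite /vjoin /cst joinx0.
Qed.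

Lemma comonotone_supremal_join_indicator : (forall c, f (cst c) = c) ->
  comonotone_supremal f ->
  forall I c, f (vjoin (cst c) (indicator I)) = c `|` f (indicator I).
Proof.
move=> f_cst f_sup I c; rewrite f_sup ?f_cst //.
exact/comonotone_cstl/indicator_comparable.
Qed.

Lemma comonotone_infimal_meet_indicator : (forall c, f (cst c) = c) ->
  comonotone_infimal f ->
  forall I c, f (vmeet (cst c) (indicator I)) = c `&` f (indicator I).
Proof.
move=> f_cst f_inf I c; rewrite f_inf ?f_cst //.
exact/comonotone_cstl/indicator_comparable.
Qed.

Hypothesis f_meet_indicator :
  forall I c, f (vmeet (cst c) (indicator I)) = c `&` f (indicator I).
Hypothesis f_join_indicator :
  forall I c, f (vjoin (cst c) (indicator I)) = c `|` f (indicator I).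

Let m I := f (indicator I).

Lemma sugeno_indicator_le x : sugeno m x <= f x.
Proof.
apply/joinsP => I _; rewrite meetC /m -f_meet_indicator.
apply: f_mono => i; rewrite /vmeet /cst /indicator.
by case: ifP => iI; rewrite ?meetx1 ?meetx0 ?le0x // meets_inf.
Qed.

Lemma le_sugeno_indicator x : f x <= sugeno m x.
Proof.
have m_mono (I J : {set 'I_n}) : I \subset J -> m I <= m J.
  by move=> /vle_indicator /f_mono.
apply: (le_sugeno m_mono f_mono) => {}x.
rewrite joinC /m -f_join_indicator; apply: f_mono => i.
rewrite /vjoin /cst /indicator; case: ifP => iT; first by rewrite joinx1 lex1.
by rewrite joinx0 (joins_sup (j := i)) ?iT.
Qed.

Lemma sugeno_indicator x : f x = sugeno m x.
Proof. by apply/le_anti; rewrite le_sugeno_indicator sugeno_indicator_le. Qed.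

End Indicator.

Theorem corollary3 (d : Order.disp_t) (L : tbDistrLatticeType d) (n : nat)
    (f : ('I_n -> L) -> L) :
  aggregation f ->
  (inf_homogeneous f /\ comonotone_supremal f) \/
  (sup_homogeneous f /\ comonotone_infimal f) ->
  exists m : {set 'I_n} -> L, capacity m /\ forall x, f x = sugeno m x.
Proof.
case=> f_mono f_bot f_top hom.
exists (fun I => f (indicator I)); split; first exact: capacity_indicator.
case: hom => [[f_inf f_sup] | [f_sup f_inf]].
- have f_cst := inf_homogeneous_cst f_mono f_top f_inf.
  apply: (sugeno_indicator f_mono) => [I c|]; first exact: f_inf.
  exact: comonotone_supremal_join_indicator.
- have f_cst := sup_homogeneous_cst f_mono f_bot f_sup.
  apply: (sugeno_indicator f_mono) => [|I c]; last exact: f_sup.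
  exact: comonotone_infimal_meet_indicator.
Qed.
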